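(* Let $k\ge 2$, and let $p,q$ be real polynomials with $\deg p=k$, $\deg q=k-1$, whose roots are real, simple and strictly interlacing, with roots of $p$ denoted $p_1<\dots<p_k$. Let $r>0$ and $\varphi\in(-\pi,\pi]$. Then all solutions $z\in\mathbb{C}$ of $\frac{q(z)}{p(z)}=re^{i\varphi}$, except at most one, lie in the closed disk $\{z:|z-\frac{p_1+p_k}{2}|\le\frac{p_k-p_1}{2}\}$. *)

(* Complex numbers: an arbitrary numClosedFieldType C
   (e.g. algC); "real" = Num.real elements of C. *)
From HB Require Import structures.
From mathcomp Require Import all_boot all_order all_algebra.
Set Implicit Arguments. Unset Strict Implicit. Unset Printing Implicit Defensive.
Import Order.TTheory GRing.Theory Num.Theory.
Local Open Scope ring_scope.

Definition simple_real_roots (C : numClosedFieldType) (p : {poly C})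
  (ps : seq C) : Prop :=
  [/\ all (fun x => x \is Num.real) ps,
      sorted <%R ps &
      p = lead_coef p *: \prod_(x <- ps) ('X - x%:P)].

Definition strictly_interlacing (C : numClosedFieldType) (ps qs : seq C) : Prop :=
  size qs = (size ps).-1 /\
  forall i : nat, (i < (size ps).-1)%N -> ps`_i < qs`_i < ps`_i.+1.

From HB Require Import structures.
From mathcomp Require Import all_boot all_order all_algebra ring.
Import Order.TTheory GRing.Theory Num.Theory.
Set Implicit Arguments.
Unset Strict Implicit.
Unset Printing Implicit Defensive.
Local Open Scope ring_scope.

(* Lagrange interpolation at the roots [x_i] of [p] gives
   [q / p = lc(q) / lc(p) * sum_i c_i / (z - x_i)], and interlacing makes
   every [c_i] positive.  Seen from a point [z] outside the disk with diameter
   [[x_1, x_k]], the segment [[x_1, x_k]] subtends an acute angle (Thales), so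
   for a suitable direction [e] all the [e / (z - x_i)] lie in the sector
   [|arg| < pi/4].  If two such points [z1 <> z2] had the same value, then
   [sum_i c_i / ((z1 - x_i) (z2 - x_i)) = 0]; but after multiplication by
   [e1 e2] every term lies in the open right half-plane. *)

Section Sector.
Variable C : numClosedFieldType.
Implicit Types c s t x y : C.

(* The open sector [|arg x| < pi/4]. *)
Definition sector x := `|'Im x| < 'Re x.

Lemma sector_neq0 x : sector x -> x != 0.
Proof. by apply: contraTneq => ->; rewrite /sector !raddf0 normr0 ltxx. Qed.

Lemma sectorZ c x : 0 < c -> sector x -> sector (c * x).
Proof.
move=> c_gt0; have cR : c \is Num.real by rewrite gtr0_real.
by rewrite /sector ReMl // ImMl // normrM gtr0_norm // ltr_pM2l.
Qed.

Lemma sectorV x : sector x -> sector x^-1.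
Proof.
move=> Sx; have x0 := sector_neq0 Sx; move: Sx; rewrite /sector ReV ImV => Sx.
have n_gt0 : 0 < (`|x| ^+ 2)^-1 by rewrite invr_gt0 exprn_gt0 // normr_gt0.
by rewrite mulNr normrN normrM (gtr0_norm n_gt0) ltr_pM2r.
Qed.

Lemma sector_convex s t x y : 0 <= s -> 0 <= t -> s + t = 1 ->
  sector x -> sector y -> sector (s * x + t * y).
Proof.
move=> s_ge0 t_ge0 st1 Sx Sy.
have [sR tR] : s \is Num.real /\ t \is Num.real by rewrite !ger0_real.
rewrite /sector !raddfD /= !ReMl // !ImMl //.
apply: le_lt_trans (ler_normD _ _) _.
rewrite !normrM (ger0_norm s_ge0) (ger0_norm t_ge0).
have [s0|s_neq0] := eqVneq s 0.
  by move: st1; rewrite s0 add0r => ->; rewrite !mul0r !add0r !mul1r.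
have s_gt0 : 0 < s by rewrite lt_def s_neq0.
by apply: ltr_leD; [rewrite ltr_pM2l | rewrite ler_wpM2l // ltW].
Qed.

(* Arguments add under multiplication, so [arg (x * y)] lies in (-pi/2, pi/2). *)
Lemma sector_Re_mul_gt0 x y : sector x -> sector y -> 0 < 'Re (x * y).
Proof.
move=> Sx Sy; rewrite ReM subr_gt0.
apply: le_lt_trans (real_ler_norm _) _; first by rewrite rpredM.
by rewrite normrM; apply: ltr_pM.
Qed.

(* [`|w| + w] bisects the angle between [w] and the positive real axis. *)
Lemma sector_norm_add w : 0 < 'Re w -> sector (`|w| + w).
Proof.
move=> Rew_gt0; have nR : `|w| \is Num.real := normr_real w.
rewrite /sector !raddfD /= (Creal_ReP _ nR) (Creal_ImP _ nR) add0r.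
apply: le_lt_trans (ltr_pwDr Rew_gt0 (lexx _)).
have := leif_normC_Re_Creal ('i * w).
by rewrite ReMil normrN normrM normCi mul1r => -[].
Qed.

(* [e] bisects the acute angle between [u] and [v]. *)
Lemma sector_bisector u v : 0 < 'Re (u * v^*) ->
  let e := `|v| * u + `|u| * v in sector (u * e^*) /\ sector (v * e^*).
Proof.
move=> Re_gt0 e.
have u0 : u != 0 by apply: contraTneq Re_gt0 => ->; rewrite mul0r raddf0 ltxx.
have v0 : v != 0 by apply: contraTneq Re_gt0 => ->; rewrite conjC0 mulr0 raddf0 ltxx.
have eE : e^* = `|v| * u^* + `|u| * v^*.
  by rewrite /e rmorphD !rmorphM /= !(conj_Creal (normr_real _)).
split.
  have -> : u * e^* = `|u| * (`|u * v^*| + u * v^*).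
    rewrite eE normrM norm_conjC !mulrDr; congr (_ + _); last exact: mulrCA.
    by rewrite mulrCA -normCK expr2 mulrC mulrA.
  by apply: sectorZ; [rewrite normr_gt0 | apply: sector_norm_add].
have -> : v * e^* = `|v| * (`|(u * v^*)^*| + (u * v^*)^*).
  rewrite eE norm_conjC normrM norm_conjC rmorphM /= conjCK !mulrDr addrC.
  congr (_ + _); first by rewrite mulrCA -normCK expr2 mulrCA.
  by rewrite mulrCA [v * _]mulrC.
apply: sectorZ; first by rewrite normr_gt0.
by apply: sector_norm_add; rewrite Re_conj.
Qed.

End Sector.

Section DiskExterior.
Variable C : numClosedFieldType.
Implicit Types a b x z e : C.

Lemma sector_div_conj e y : sector (y * e^*) -> sector (e / y).
Proof.
move=> Sy; have /sector_neq0 := Sy; rewrite mulf_eq0 negb_or conjC_eq0 => /andP[_ e0].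
have -> : e / y = (e * e^*) * (y * e^*)^-1.
  by rewrite invfM mulrACA mulfV ?conjC_eq0 // mulr1.
by apply: sectorZ; [rewrite mul_conjC_gt0 | apply: sectorV].
Qed.

Lemma sector_segment a b z f x : a < b -> a <= x <= b ->
  sector ((z - a) * f) -> sector ((z - b) * f) -> sector ((z - x) * f).
Proof.
move=> ab /andP[ax xb] Sa Sb; have ba0 : b - a != 0 by rewrite subr_eq0 gt_eqF.
pose t := (b - x) / (b - a); pose s := (x - a) / (b - a).
have -> : (z - x) * f = t * ((z - a) * f) + s * ((z - b) * f).
  by rewrite /t /s; field.
apply: sector_convex => //; last by rewrite /t /s; field.
  by rewrite divr_ge0 ?subr_ge0 // ltW.
by rewrite divr_ge0 ?subr_ge0 // ltW.
Qed.

(* Thales: seen from a point outside the disk with diameter [[a, b]], the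
   segment [[a, b]] subtends an acute angle. *)
Lemma disk_exterior_acute a b z : a <= b ->
  ~ (`|z - (a + b) / 2%:R| <= (b - a) / 2%:R) -> 0 < 'Re ((z - a) * (z - b)^*).
Proof.
move=> ab; set y := z - _; set r := (b - a) / 2%:R => z_out.
have r_ge0 : 0 <= r by rewrite divr_ge0 ?subr_ge0 ?ler0n.
have rR : r \is Num.real by rewrite ger0_real.
have r_lt_y : r < `|y| by rewrite real_ltNge ?normr_real //; apply/negP.
have -> : (z - a) * (z - b)^* = (`|y| ^+ 2 - r ^+ 2) + r * (y^* - y).
  have [-> ->] : z - a = y + r /\ z - b = y - r by split; rewrite /y /r; field.
  by rewrite rmorphB /= (conj_Creal rR) normCK; ring.
have nR : `|y| ^+ 2 - r ^+ 2 \is Num.real by rewrite rpredB ?rpredX ?normr_real.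
rewrite raddfD /= (Creal_ReP _ nR) ReMl // raddfB /= Re_conj subrr mulr0 addr0.
by rewrite subr_gt0 ltrXn2r.
Qed.

Lemma disk_exterior_sector a b z : a < b ->
  ~ (`|z - (a + b) / 2%:R| <= (b - a) / 2%:R) ->
  exists e, forall x, a <= x <= b -> sector (e / (z - x)).
Proof.
move=> ab z_out; have [Sa Sb] := sector_bisector (disk_exterior_acute (ltW ab) z_out).
by eexists => x xab; apply: sector_div_conj; apply: sector_segment xab Sa Sb.
Qed.

Lemma sum_sector_frac_neq0 n (c u v : 'I_n -> C) e f : (0 < n)%N ->
  (forall i, 0 < c i) -> (forall i, sector (e / u i)) -> (forall i, sector (f / v i)) ->
  \sum_(i < n) c i / (u i * v i) != 0.
Proof.
move=> n_gt0 c_gt0 Su Sv; apply: contraTneq isT => sum0.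
have term_gt0 i : 0 < 'Re (e * f * (c i / (u i * v i))).
  rewrite invfM mulrCA (mulrACA e) ReMl ?gtr0_real //.
  by rewrite pmulr_rgt0 // sector_Re_mul_gt0.
have : 0 < 'Re (e * f * \sum_(i < n) c i / (u i * v i)).
  rewrite mulr_sumr raddf_sum (bigD1 (Ordinal n_gt0)) //=.
  by apply: ltr_wpDr; [apply: sumr_ge0 => i _; apply: ltW | ].
by rewrite sum0 mulr0 raddf0 ltxx.
Qed.

Lemma partial_fractions_inj_disk_exterior n (x c : 'I_n -> C) a b z1 z2 :
  (0 < n)%N -> a < b -> (forall i, a <= x i <= b) -> (forall i, 0 < c i) ->
  ~ (`|z1 - (a + b) / 2%:R| <= (b - a) / 2%:R) ->
  ~ (`|z2 - (a + b) / 2%:R| <= (b - a) / 2%:R) ->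
  \sum_(i < n) c i / (z1 - x i) = \sum_(i < n) c i / (z2 - x i) -> z1 = z2.
Proof.
move=> n_gt0 ab x_ab c_gt0 z1_out z2_out eq_sums.
have [e Se] := disk_exterior_sector ab z1_out.
have [f Sf] := disk_exterior_sector ab z2_out.
have u0 i : z1 - x i != 0.
  by apply: contraTneq (sector_neq0 (Se _ (x_ab i))) => ->; rewrite invr0 mulr0 eqxx.
have v0 i : z2 - x i != 0.
  by apply: contraTneq (sector_neq0 (Sf _ (x_ab i))) => ->; rewrite invr0 mulr0 eqxx.
have : (z2 - z1) * \sum_(i < n) c i / ((z1 - x i) * (z2 - x i)) = 0.
  rewrite -[RHS](subrr (\sum_(i < n) c i / (z2 - x i))) -{1}eq_sums -sumrB mulr_sumr.
  by apply: eq_bigr => i _; field; rewrite u0 v0.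
move/eqP; rewrite mulf_eq0 subr_eq0 => /orP[/eqP -> //|].
by rewrite (negbTE (sum_sector_frac_neq0 n_gt0 c_gt0 (fun i => Se _ (x_ab i))
  (fun i => Sf _ (x_ab i)))).
Qed.

End DiskExterior.

Section PartialFractions.
Variables (F : fieldType) (n : nat) (x : 'I_n -> F).
Hypothesis x_inj : injective x.

Lemma size_prod_XsubC_omit (i : 'I_n) :
  size (\prod_(j | j != i) ('X - (x j)%:P)) = n.
Proof.
rewrite -big_filter size_prod_XsubC size_filter -sum1_count sum1_card.
by rewrite cardC1 card_ord prednK // (leq_ltn_trans (leq0n i) (ltn_ord i)).
Qed.

(* The residue at [x i] of [f / \prod_j ('X - x j)]. *)
Definition residue (f : {poly F}) (i : 'I_n) :=
  f.[x i] / \prod_(j | j != i) (x i - x j).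

Lemma lagrange_interpolation (f : {poly F}) : (size f <= n)%N ->
  f = \sum_(i < n) residue f i *: \prod_(j | j != i) ('X - (x j)%:P).
Proof.
move=> size_f; apply/eqP; rewrite -subr_eq0; apply/eqP.
apply: (@roots_geq_poly_eq0 _ _ [seq x i | i <- enum 'I_n]).
- apply/allP => _ /mapP[m _ ->]; rewrite rootE hornerD hornerN horner_sum subr_eq0.
  rewrite (bigD1 m) //= [X in _ == _ + X]big1 => [|i im]; last first.
    rewrite hornerZ horner_prod (bigD1 m) 1?eq_sym //= hornerXsubC subrr.
    by rewrite mul0r mulr0.
  rewrite addr0 hornerZ horner_prod /residue.
  under [X in _ * X]eq_bigr do rewrite hornerXsubC.
  rewrite divfK //; apply/prodf_neq0 => j jm.
  by rewrite subr_eq0 (inj_eq x_inj) eq_sym.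
- by rewrite map_inj_uniq ?enum_uniq.
rewrite size_map size_enum_ord (leq_trans (size_polyD _ _)) // size_polyN geq_max size_f.
apply: leq_trans (size_sum _ _ _) _; apply/bigmax_leqP => i _.
by rewrite (leq_trans (size_scale_leq _ _)) ?size_prod_XsubC_omit.
Qed.

Lemma horner_partial_fractions (f : {poly F}) z : (size f <= n)%N ->
  (forall i, z != x i) ->
  f.[z] / \prod_(i < n) (z - x i) = \sum_(i < n) residue f i / (z - x i).
Proof.
move=> size_f z_x; have zx0 i : z - x i != 0 by rewrite subr_eq0.
rewrite {1}(lagrange_interpolation size_f) horner_sum mulr_suml.
apply: eq_bigr => i _; rewrite hornerZ horner_prod [X in _ / X](bigD1 i) //=.
under eq_bigr do rewrite hornerXsubC.
by rewrite invfM mulrA mulrAC mulfK //; apply/prodf_neq0.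
Qed.

End PartialFractions.

Lemma big_ord_neq_lift (R : Type) (idx : R) (op : Monoid.com_law idx) n
    (i : 'I_n) (F : 'I_n -> R) :
  \big[op/idx]_(j | j != i) F j = \big[op/idx]_(j < n.-1) F (lift i j).
Proof.
rewrite (reindex_omap (lift i) (unlift i)) /=.
  by apply: eq_bigl => j; rewrite liftK eqxx eq_sym neq_lift.
by move=> j; case: unliftP => [k ->|->]; rewrite ?eqxx.
Qed.

Section Interlacing.
Variables (C : numClosedFieldType) (ps qs : seq C).
Hypotheses (ps_sorted : sorted <%R ps) (ps_qs : strictly_interlacing ps qs).

Lemma interlacing_factor_gt0 (i j : nat) : (i < size ps)%N -> (j < (size ps).-1)%N ->
  0 < (ps`_i - qs`_j) / (ps`_i - ps`_(bump i j)).
Proof.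
move=> i_lt j_lt; have j1_lt : (j.+1 < size ps)%N by rewrite -ltn_predRL.
have j_lt_size : (j < size ps)%N := ltnW j1_lt.
have [q_gt q_lt] := andP (ps_qs.2 j j_lt).
have lt_ps := lt_sorted_ltn_nth 0 ps_sorted.
have le_ps := lt_sorted_leq_nth 0 ps_sorted.
rewrite /bump; case: leqP => [ij | ji]; rewrite ?add1n ?add0n.
  rewrite -mulrNN -invrN !opprB divr_gt0 // subr_gt0.
    by apply: le_lt_trans q_gt; rewrite le_ps.
  by rewrite lt_ps // ltnS.
rewrite divr_gt0 // subr_gt0 ?lt_ps //.
by apply: lt_le_trans q_lt _; rewrite le_ps.
Qed.

Lemma interlacing_residue_gt0 (i : 'I_(size ps)) :
  0 < \prod_(y <- qs) (ps`_i - y) / \prod_(j | j != i) (ps`_i - ps`_j).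
Proof.
rewrite big_ord_neq_lift (big_nth 0) big_mkord ps_qs.1 -prodf_div.
by apply: prodr_gt0 => j _; apply: interlacing_factor_gt0.
Qed.

End Interlacing.

Lemma horner_simple_real_roots (C : numClosedFieldType) (p : {poly C}) ps z :
  simple_real_roots p ps -> p.[z] = lead_coef p * \prod_(x <- ps) (z - x).
Proof.
case=> _ _ p_eq; rewrite {1}p_eq hornerZ horner_prod.
by under eq_bigr do rewrite hornerXsubC.
Qed.

Section Corollary.
Variables (C : numClosedFieldType) (p q : {poly C}) (ps qs : seq C).
Hypotheses (p_roots : simple_real_roots p ps) (q_roots : simple_real_roots q qs).
Hypothesis size_q : size q = size ps.

Let x (i : 'I_(size ps)) := ps`_i.

Lemma sorted_roots_inj : injective x.
Proof.
have [_ ps_sorted _] := p_roots; have ps_uniq := sorted_uniq lt_trans ltxx ps_sorted.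
by move=> i j /eqP; rewrite /x nth_uniq // => /eqP/val_inj.
Qed.

Lemma horner_ratio_partial_fractions z : p.[z] != 0 ->
  q.[z] / p.[z] = lead_coef q / lead_coef p *
    \sum_(i < size ps) (\prod_(y <- qs) (x i - y) / \prod_(j | j != i) (x i - x j)) / (z - x i).
Proof.
rewrite !(horner_simple_real_roots _ p_roots) (big_nth 0) big_mkord.
rewrite mulf_eq0 negb_or => /andP[lp0 /prodf_neq0 zx0].
have z_x i : z != x i by rewrite -subr_eq0 zx0.
rewrite invfM mulrCA -mulrA (horner_partial_fractions sorted_roots_inj) ?size_q //.
rewrite [RHS]mulrCA; congr (_ * _); rewrite mulr_sumr; apply: eq_bigr => i _.
by rewrite /residue (horner_simple_real_roots _ q_roots) !mulrA.
Qed.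

End Corollary.

Theorem corollary2 (C : numClosedFieldType) (k : nat) (p q : {poly C})
  (ps qs : seq C) (w : C) :
  (2 <= k)%N ->
  p \is a polyOver Num.real -> q \is a polyOver Num.real ->
  size p = k.+1 -> size q = k ->
  size ps = k -> simple_real_roots p ps -> simple_real_roots q qs ->
  strictly_interlacing ps qs ->
  w != 0 ->
  forall z1 z2 : C,
    p.[z1] != 0 -> q.[z1] / p.[z1] = w ->
    p.[z2] != 0 -> q.[z2] / p.[z2] = w ->
    ~ (`|z1 - (ps`_0 + ps`_k.-1) / 2%:R| <= (ps`_k.-1 - ps`_0) / 2%:R) ->
    ~ (`|z2 - (ps`_0 + ps`_k.-1) / 2%:R| <= (ps`_k.-1 - ps`_0) / 2%:R) ->
    z1 = z2.
Proof.
move=> k_ge2 _ _ _ size_q size_ps; rewrite -{}size_ps in k_ge2 size_q *.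
move=> p_roots q_roots ps_qs _ z1 z2 pz1 qz1 pz2 qz2.
have [_ ps_sorted _] := p_roots.
have n_gt0 : (0 < size ps)%N := ltnW k_ge2.
have last_lt : ((size ps).-1 < size ps)%N by rewrite prednK.
have ab : ps`_0 < ps`_(size ps).-1.
  by rewrite (lt_sorted_ltn_nth 0 ps_sorted) ?inE ?n_gt0 ?last_lt // ltn_predRL.
have x_ab (i : 'I_(size ps)) : ps`_0 <= ps`_i <= ps`_(size ps).-1.
  by rewrite !(lt_sorted_leq_nth 0 ps_sorted) ?inE ?n_gt0 ?last_lt //= -ltnS prednK.
move=> z1_out z2_out.
apply: (partial_fractions_inj_disk_exterior n_gt0 ab x_ab
  (interlacing_residue_gt0 ps_sorted ps_qs) z1_out z2_out).
have lq0 : lead_coef q != 0 by rewrite lead_coef_eq0 -size_poly_gt0 size_q.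
have lp0 : lead_coef p != 0.
  by rewrite lead_coef_eq0; apply: contraNneq pz1 => ->; rewrite horner0.
apply: (mulfI (mulf_neq0 lq0 (invr_neq0 lp0))).
by rewrite -!(horner_ratio_partial_fractions p_roots q_roots size_q) // qz1 qz2.
Qed.
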